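(* Let $\Gamma$ be a countable group acting on a countably infinite set $X$ preserving a mean $\mu$, and suppose that for every $\gamma\neq1$ the fixed point set of $\gamma$ in $X$ has $\mu$-measure less than $1$. Then $\Gamma$ admits an action on a countably infinite set $K$ preserving a mean $\nu$ on $K$ such that for every $\gamma\ne1$ the fixed point set of $\gamma$ in $K$ has $\nu$-measure $0$.
   Context: A mean on a set $X$ is a finitely additive $\mu:2^X\to[0,1]$ with $\mu(X)=1$; an action preserves $\mu$ if $\mu(\gamma A)=\mu(A)$ for all $\gamma$ and $A$. *)

From Stdlib Require Export Reals.
Open Scope R_scope.

Definition is_group (G : Type) (mul : G -> G -> G) (one : G) (inv : G -> G) : Prop :=
  (forall a b c, mul a (mul b c) = mul (mul a b) c) /\
  (forall a, mul one a = a) /\ (forall a, mul a one = a) /\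
  (forall a, mul (inv a) a = one) /\ (forall a, mul a (inv a) = one).

Definition countable (T : Type) : Prop :=
  exists f : T -> nat, forall x y, f x = f y -> x = y.

Definition countably_infinite (T : Type) : Prop :=
  exists f : nat -> T, (forall m n, f m = f n -> m = n) /\ (forall x, exists n, f n = x).

Definition is_action (G X : Type) (mul : G -> G -> G) (one : G)
  (act : G -> X -> X) : Prop :=
  (forall x, act one x = x) /\
  (forall g h x, act (mul g h) x = act g (act h x)).

Definition full_set (X : Type) : X -> Prop := fun _ => True.
Definition set_union {X : Type} (A B : X -> Prop) : X -> Prop := fun x => A x \/ B x.
Definition disjoint {X : Type} (A B : X -> Prop) : Prop := forall x, ~ (A x /\ B x).

Definition is_mean (X : Type) (mu : (X -> Prop) -> R) : Prop :=
  (forall A, 0 <= mu A <= 1) /\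
  mu (full_set X) = 1 /\
  (forall A B, disjoint A B -> mu (set_union A B) = mu A + mu B).

Definition image_set {G X : Type} (act : G -> X -> X) (g : G) (A : X -> Prop) : X -> Prop :=
  fun y => exists a, A a /\ y = act g a.

Definition preserves_mean {G X : Type} (act : G -> X -> X) (mu : (X -> Prop) -> R) : Prop :=
  forall g A, mu (image_set act g A) = mu A.

Definition fix_set {G X : Type} (act : G -> X -> X) (g : G) : X -> Prop :=
  fun x => act g x = x.

(** Take the finite sequences [K = list X] with the diagonal action and the
    mean [nu A = lim_U mu^n (A ∩ X^n)], where [mu^n] is the [n]-fold product
    of [mu] (iterated integration against a mean) and [U] is a non-principal
    ultrafilter on [nat].  The fixed points of [g] in [X^n] form
    [(Fix g)^n], of [mu^n]-measure at most [mu (Fix g) ^ n], which tends to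
    [0] when [mu (Fix g) < 1]; hence [nu (Fix g) = 0]. *)

From Stdlib Require Import Lra Lia ZArith List Classical ClassicalEpsilon
  FunctionalExtensionality PropExtensionality.
From Stdlib Require Cantor.
From mathcomp Require filter.
Set Bullet Behavior "Strict Subproofs".
Open Scope R_scope.

Lemma pred_ext {T : Type} (A B : T -> Prop) : (forall x, A x <-> B x) -> A = B.
Proof.
  intros H; apply functional_extensionality; intros x.
  apply propositional_extensionality; auto.
Qed.

Lemma pow_unit_interval c n : 0 <= c <= 1 -> 0 <= c ^ n <= 1.
Proof. intros H; induction n; simpl; nra. Qed.

Lemma Rle_of_le_plus_div_succ x y c :
  0 <= c -> (forall n, x <= y + c / INR (S n)) -> x <= y.
Proof.
  intros Hc H. apply Rle_plus_epsilon. intros eps Heps.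
  destruct (INR_unbounded (c / eps)) as [n Hn].
  specialize (H n).
  assert (HS : INR n < INR (S n)) by (apply lt_INR; lia).
  assert (Hpos : 0 < INR (S n)) by (apply lt_0_INR; lia).
  assert (c / INR (S n) <= eps).
  { apply (Rmult_le_reg_r (INR (S n))); [exact Hpos|].
    unfold Rdiv. rewrite Rmult_assoc, Rinv_l by lra.
    assert (c / eps * eps = c) by (field; lra).
    assert (c / eps * eps <= INR (S n) * eps) by (apply Rmult_le_compat_r; lra).
    lra. }
  lra.
Qed.

Definition indicator {T : Type} (B : T -> Prop) (x : T) : R :=
  if excluded_middle_informative (B x) then 1 else 0.

Definition indicator_nat {T : Type} (B : T -> Prop) (x : T) : nat :=
  if excluded_middle_informative (B x) then 1%nat else 0%nat.

Section Mean.

Variable T : Type.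
Variable m : (T -> Prop) -> R.
Hypothesis Hm : is_mean T m.

Lemma mean_ext A B : (forall x, A x <-> B x) -> m A = m B.
Proof. intros H; rewrite (pred_ext A B H); reflexivity. Qed.

Lemma mean_bounds A : 0 <= m A <= 1.
Proof. destruct Hm as [H _]; apply H. Qed.

Lemma mean_full : m (fun _ => True) = 1.
Proof. destruct Hm as [_ [H _]]; exact H. Qed.

Lemma mean_union A B :
  (forall x, ~ (A x /\ B x)) -> m (fun x => A x \/ B x) = m A + m B.
Proof. destruct Hm as [_ [_ H]]; apply H. Qed.

Lemma mean_empty : m (fun _ => False) = 0.
Proof.
  assert (H := mean_union (fun _ => False) (fun _ => False) ltac:(firstorder)).
  rewrite (mean_ext _ (fun _ => False)) in H by tauto.
  lra.
Qed.

Lemma mean_mono A B : (forall x, A x -> B x) -> m A <= m B.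
Proof.
  intros H.
  assert (E := mean_union A (fun x => B x /\ ~ A x) ltac:(firstorder)).
  rewrite (mean_ext _ B) in E.
  2:{ intros x; split; [firstorder|]. intros Hb; destruct (classic (A x)); tauto. }
  pose proof (mean_bounds (fun x => B x /\ ~ A x)).
  lra.
Qed.

(* For [h] bounded by [M], this is the layer-cake formula for the
   [m]-integral of [h]: the sum over [1 <= k <= M] of [m {h >= k}]. *)
Fixpoint layer_sum (h : T -> nat) (M : nat) : R :=
  match M with
  | O => 0
  | S M' => layer_sum h M' + m (fun x => (S M' <= h x)%nat)
  end.

Lemma layer_sum_ext h h' M : (forall x, h x = h' x) -> layer_sum h M = layer_sum h' M.
Proof. intros H. rewrite (functional_extensionality h h' H). reflexivity. Qed.

Lemma layer_sum_mono h h' :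
  (forall x, (h x <= h' x)%nat) -> forall M, layer_sum h M <= layer_sum h' M.
Proof.
  intros H M; induction M as [|M IH]; simpl; [lra|].
  assert (m (fun x => (S M <= h x)%nat) <= m (fun x => (S M <= h' x)%nat)).
  { apply mean_mono. intros x; specialize (H x); lia. }
  lra.
Qed.

Lemma layer_sum_bounds h M : 0 <= layer_sum h M <= INR M.
Proof.
  induction M as [|M IH]; cbn [layer_sum]; [simpl; lra|].
  rewrite S_INR. pose proof (mean_bounds (fun x => (S M <= h x)%nat)). lra.
Qed.

Lemma layer_sum_beyond h M :
  (forall x, (h x <= M)%nat) -> forall k, layer_sum h (M + k) = layer_sum h M.
Proof.
  intros H k; induction k as [|k IH].
  - rewrite Nat.add_0_r; reflexivity.
  - rewrite Nat.add_succ_r; simpl. rewrite IH.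
    rewrite (mean_ext _ (fun _ => False)), mean_empty; [lra|].
    intros x; specialize (H x); split; [lia|tauto].
Qed.

Lemma layer_sum_comp (a : T -> T) (Ha : forall P, m (fun x => P (a x)) = m P) h M :
  layer_sum (fun x => h (a x)) M = layer_sum h M.
Proof.
  induction M as [|M IH]; simpl; [reflexivity|].
  rewrite IH. f_equal. exact (Ha (fun y => (S M <= h y)%nat)).
Qed.

Lemma layer_sum_add_indicator h B M :
  layer_sum (fun x => (h x + indicator_nat B x)%nat) M
  = layer_sum h M + m (fun x => (h x < M)%nat /\ B x).
Proof.
  induction M as [|M IH]; simpl.
  - rewrite (mean_ext _ (fun _ => False)), mean_empty; [lra|].
    intros; split; [lia|tauto].
  - rewrite IH.
    rewrite (mean_ext (fun x => (S M <= h x + indicator_nat B x)%nat)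
               (fun x => (S M <= h x)%nat \/ (h x = M /\ B x))).
    2:{ intros x; unfold indicator_nat.
        destruct (excluded_middle_informative (B x)); split.
        - intros Hx. destruct (Nat.eq_dec (h x) M); [right; split; auto|left; lia].
        - intros [Hx|[Hx _]]; lia.
        - intros Hx; left; lia.
        - intros [Hx|[_ Hx]]; [lia|tauto]. }
    rewrite mean_union by (intros x; lia).
    rewrite (mean_ext (fun x => (h x < S M)%nat /\ B x)
               (fun x => ((h x < M)%nat /\ B x) \/ (h x = M /\ B x))).
    2:{ intros x; split.
        - intros [H1 H2]; destruct (Nat.eq_dec (h x) M); [right|left]; split; auto; lia.
        - intros [[]|[]]; split; auto; lia. }
    rewrite mean_union by (intros x; lia).
    lra.
Qed.

Lemma layer_sum_add M2 : forall h1 h2 M1,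
  (forall x, (h1 x <= M1)%nat) -> (forall x, (h2 x <= M2)%nat) ->
  layer_sum (fun x => (h1 x + h2 x)%nat) (M1 + M2) = layer_sum h1 M1 + layer_sum h2 M2.
Proof.
  induction M2 as [|M2 IH]; intros h1 h2 M1 H1 H2.
  - rewrite Nat.add_0_r. simpl. rewrite (layer_sum_ext _ h1); [lra|].
    intros x; specialize (H2 x); lia.
  - (* peel off the top layer [{h2 = M2 + 1}] of [h2] *)
    set (h2' := fun x => Nat.min (h2 x) M2).
    set (B := fun x => h2 x = S M2).
    assert (E : forall x, h2 x = (h2' x + indicator_nat B x)%nat).
    { intros x; unfold h2', B, indicator_nat; specialize (H2 x).
      destruct (excluded_middle_informative (h2 x = S M2)); lia. }
    assert (H2' : forall x, (h2' x <= M2)%nat) by (intros x; unfold h2'; lia).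
    rewrite (layer_sum_ext (fun x => (h1 x + h2 x)%nat)
               (fun x => ((h1 x + h2' x) + indicator_nat B x)%nat))
      by (intros x; rewrite E; lia).
    rewrite (layer_sum_ext h2 (fun x => (h2' x + indicator_nat B x)%nat)) by auto.
    rewrite Nat.add_succ_r, !layer_sum_add_indicator.
    rewrite (mean_ext (fun x => (h1 x + h2' x < S (M1 + M2))%nat /\ B x) B).
    2:{ intros x; specialize (H1 x); specialize (H2' x); split; [tauto|].
        intros; split; auto; lia. }
    rewrite (mean_ext (fun x => (h2' x < S M2)%nat /\ B x) B).
    2:{ intros x; specialize (H2' x); split; [tauto|]. intros; split; auto; lia. }
    replace (S (M1 + M2)) with (M1 + M2 + 1)%nat by lia.
    rewrite layer_sum_beyond by (intros x; specialize (H1 x); specialize (H2' x); lia).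
    replace (S M2) with (M2 + 1)%nat by lia.
    rewrite (layer_sum_beyond h2') by auto.
    rewrite IH by auto.
    lra.
Qed.

Lemma layer_sum_scale h M : (forall x, (h x <= M)%nat) -> forall k,
  layer_sum (fun x => (k * h x)%nat) (k * M) = INR k * layer_sum h M.
Proof.
  intros H k; induction k as [|k IH].
  - simpl. lra.
  - rewrite (layer_sum_ext _ (fun x => (h x + k * h x)%nat)) by (intros; simpl; lia).
    replace (S k * M)%nat with (M + k * M)%nat by (simpl; lia).
    rewrite layer_sum_add, IH, S_INR; [lra|auto|].
    intros x; specialize (H x); nia.
Qed.

Lemma layer_sum_const c M : (M <= c)%nat -> layer_sum (fun _ => c) M = INR M.
Proof.
  induction M as [|M IH]; intros H; simpl; [lra|].
  rewrite IH by lia.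
  rewrite (mean_ext _ (fun _ => True)), mean_full by (intros; split; auto; lia).
  destruct M; simpl; lra.
Qed.

Lemma layer_sum_scaled_indicator k B :
  layer_sum (fun x => (k * indicator_nat B x)%nat) k = INR k * m B.
Proof.
  assert (H1 : forall x, (indicator_nat B x <= 1)%nat).
  { intros x; unfold indicator_nat; destruct excluded_middle_informative; lia. }
  pose proof (layer_sum_scale (indicator_nat B) 1 H1 k) as E.
  rewrite Nat.mul_1_r in E. rewrite E.
  simpl. rewrite (mean_ext _ B); [lra|].
  intros x; unfold indicator_nat; destruct excluded_middle_informative; split; intros; lia || tauto.
Qed.

End Mean.

Definition scaled_floor (N : nat) (r : R) : nat := Z.to_nat (Int_part (INR N * r)).

Lemma scaled_floor_spec N r :
  0 <= r -> INR (scaled_floor N r) <= INR N * r < INR (scaled_floor N r) + 1.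
Proof.
  intros Hr. unfold scaled_floor. destruct (base_Int_part (INR N * r)) as [H1 H2].
  assert (0 <= INR N * r) by (apply Rmult_le_pos; auto; apply pos_INR).
  assert (Hz : (0 <= Int_part (INR N * r))%Z).
  { assert (Hlt : -1 < IZR (Int_part (INR N * r))) by lra. apply lt_IZR in Hlt. lia. }
  rewrite INR_IZR_INZ, Z2Nat.id by auto.
  lra.
Qed.

Lemma scaled_floor_le N r : 0 <= r <= 1 -> (scaled_floor N r <= N)%nat.
Proof.
  intros Hr. destruct (scaled_floor_spec N r) as [H1 _]; [lra|].
  assert (INR N * r <= INR N) by (pose proof (pos_INR N); nra).
  apply INR_le; lra.
Qed.

Lemma scaled_floor_mono N r s : 0 <= r -> r <= s -> (scaled_floor N r <= scaled_floor N s)%nat.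
Proof.
  intros Hr Hrs.
  destruct (scaled_floor_spec N r); auto. destruct (scaled_floor_spec N s); [lra|].
  assert (INR N * r <= INR N * s) by (apply Rmult_le_compat_l; auto; apply pos_INR).
  assert (Hlt : INR (scaled_floor N r) < INR (scaled_floor N s + 1))
    by (rewrite plus_INR; simpl; lra).
  apply INR_lt in Hlt; lia.
Qed.

Lemma scaled_floor_1 N : scaled_floor N 1 = N.
Proof. unfold scaled_floor. rewrite Rmult_1_r, Int_part_INR. apply Nat2Z.id. Qed.

Lemma scaled_floor_0 N : scaled_floor N 0 = 0%nat.
Proof.
  unfold scaled_floor. rewrite Rmult_0_r. change 0 with (INR 0).
  rewrite Int_part_INR. reflexivity.
Qed.

Lemma INR_succ_pos n : 0 < INR (S n).
Proof. apply lt_0_INR; lia. Qed.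

Definition unit_valued {T : Type} (f : T -> R) : Prop := forall x, 0 <= f x <= 1.

Lemma unit_valued_indicator {T : Type} (B : T -> Prop) : unit_valued (indicator B).
Proof. intros x; unfold indicator; destruct excluded_middle_informative; lra. Qed.

Lemma unit_valued_scaled_indicator {T : Type} t (B : T -> Prop) :
  0 <= t <= 1 -> unit_valued (fun x => t * indicator B x).
Proof. intros Ht x; unfold indicator; destruct excluded_middle_informative; nra. Qed.

Section Integral.

Variable T : Type.
Variable m : (T -> Prop) -> R.
Hypothesis Hm : is_mean T m.

(* Lower Riemann sum, with mesh [1 / (n + 1)], of [t |-> m {f >= t}] over [0, 1]. *)
Definition lower_sum (n : nat) (f : T -> R) : R :=
  layer_sum T m (fun x => scaled_floor (S n) (f x)) (S n) / INR (S n).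

Lemma lower_sum_bounds n f : 0 <= lower_sum n f <= 1.
Proof.
  unfold lower_sum.
  pose proof (layer_sum_bounds T m Hm (fun x => scaled_floor (S n) (f x)) (S n)).
  pose proof (INR_succ_pos n).
  split.
  - apply Rmult_le_pos; [lra|]. left; apply Rinv_0_lt_compat; lra.
  - unfold Rdiv. apply (Rmult_le_reg_r (INR (S n))); auto.
    rewrite Rmult_assoc, Rinv_l; lra.
Qed.

Lemma lower_sum_le a b f : unit_valued f -> lower_sum a f <= lower_sum b f + 1 / INR (S b).
Proof.
  intros Hf. unfold lower_sum. set (A := S a). set (B := S b).
  set (ha := fun x => scaled_floor A (f x)). set (hb := fun x => scaled_floor B (f x)).
  assert (Hpt : forall x, (B * ha x <= A * hb x + A)%nat).
  { intros x. unfold ha, hb. destruct (Hf x).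
    destruct (scaled_floor_spec A (f x)); auto. destruct (scaled_floor_spec B (f x)); auto.
    assert (INR B * INR (scaled_floor A (f x)) <= INR B * (INR A * f x))
      by (apply Rmult_le_compat_l; auto; apply pos_INR).
    assert (INR A * (INR B * f x) < INR A * (INR (scaled_floor B (f x)) + 1))
      by (apply Rmult_lt_compat_l; auto; apply lt_0_INR; unfold A; lia).
    assert (Hq : INR (B * scaled_floor A (f x)) < INR (A * scaled_floor B (f x) + A + 1)).
    { rewrite !plus_INR, !mult_INR. change (INR 1) with 1. lra. }
    apply INR_lt in Hq. lia. }
  assert (Hba : forall x, (ha x <= A)%nat) by (intros; apply scaled_floor_le; auto).
  assert (Hbb : forall x, (hb x <= B)%nat) by (intros; apply scaled_floor_le; auto).
  pose proof (layer_sum_scale T m Hm ha A Hba B) as E1.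
  assert (E2 : layer_sum T m (fun x => (A * hb x + A)%nat) (A * B + A)
               = INR A * layer_sum T m hb B + INR A).
  { rewrite layer_sum_add; auto.
    - rewrite layer_sum_scale, layer_sum_const; auto.
    - intros x; specialize (Hbb x); nia. }
  assert (E3 : layer_sum T m (fun x => (B * ha x)%nat) (B * A)
               <= layer_sum T m (fun x => (A * hb x + A)%nat) (A * B + A)).
  { replace (A * B + A)%nat with (B * A + A)%nat by lia.
    rewrite <- (layer_sum_beyond T m Hm (fun x => (B * ha x)%nat) (B * A)
                  ltac:(intros x; apply Nat.mul_le_mono_l; apply Hba) A).
    apply (layer_sum_mono T m Hm); auto. }
  rewrite E1, E2 in E3.
  assert (HA : 0 < INR A) by apply INR_succ_pos.
  assert (HB : 0 < INR B) by apply INR_succ_pos.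
  unfold Rdiv. apply (Rmult_le_reg_r (INR A * INR B)); [nra|].
  replace (layer_sum T m ha A * / INR A * (INR A * INR B))
    with (INR B * layer_sum T m ha A) by (field; lra).
  replace ((layer_sum T m hb B * / INR B + 1 * / INR B) * (INR A * INR B))
    with (INR A * layer_sum T m hb B + INR A) by (field; lra).
  exact E3.
Qed.

Lemma lower_sum_add n f g :
  unit_valued f -> unit_valued g -> unit_valued (fun x => f x + g x) ->
  lower_sum n f + lower_sum n g <= lower_sum n (fun x => f x + g x)
  <= lower_sum n f + lower_sum n g + 1 / INR (S n).
Proof.
  intros Hf Hg Hfg. unfold lower_sum. set (N := S n).
  set (hf := fun x => scaled_floor N (f x)). set (hg := fun x => scaled_floor N (g x)).
  set (hs := fun x => scaled_floor N (f x + g x)).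
  assert (Hpt : forall x, (hf x + hg x <= hs x <= hf x + hg x + 1)%nat).
  { intros x. unfold hf, hg, hs. destruct (Hf x), (Hg x).
    destruct (scaled_floor_spec N (f x)); auto. destruct (scaled_floor_spec N (g x)); auto.
    destruct (scaled_floor_spec N (f x + g x)); [lra|].
    assert (Ha : INR (scaled_floor N (f x) + scaled_floor N (g x))
                 < INR (scaled_floor N (f x + g x) + 1)) by (rewrite !plus_INR; simpl; lra).
    assert (Hb : INR (scaled_floor N (f x + g x))
                 < INR (scaled_floor N (f x) + scaled_floor N (g x) + 1 + 1))
      by (rewrite !plus_INR; simpl; lra).
    apply INR_lt in Ha, Hb. lia. }
  assert (Bf : forall x, (hf x <= N)%nat) by (intros; apply scaled_floor_le; auto).
  assert (Bg : forall x, (hg x <= N)%nat) by (intros; apply scaled_floor_le; auto).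
  assert (Bs : forall x, (hs x <= N)%nat) by (intros; apply scaled_floor_le; auto).
  pose proof (layer_sum_add T m Hm N hf hg N Bf Bg) as E1.
  pose proof (layer_sum_add T m Hm 1 (fun x => (hf x + hg x)%nat) (fun _ => 1%nat) (N + N)
                ltac:(intros x; apply Nat.add_le_mono; [apply Bf|apply Bg])
                ltac:(intros; cbv beta; lia)) as E2.
  rewrite layer_sum_const in E2; [|exact Hm|lia].
  assert (L : layer_sum T m (fun x => (hf x + hg x)%nat) (N + N) <= layer_sum T m hs (N + N))
    by (apply (layer_sum_mono T m Hm); intros x; apply Hpt).
  assert (U : layer_sum T m hs (N + N + 1)
              <= layer_sum T m (fun x => (hf x + hg x + 1)%nat) (N + N + 1))
    by (apply (layer_sum_mono T m Hm); intros x; apply Hpt).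
  rewrite (layer_sum_beyond T m Hm hs N Bs) in L.
  rewrite <- Nat.add_assoc, (layer_sum_beyond T m Hm hs N Bs), Nat.add_assoc in U.
  rewrite E2, E1 in U. rewrite E1 in L. change (INR 1) with 1 in U.
  assert (HN : 0 < INR N) by apply INR_succ_pos.
  unfold Rdiv. split.
  - rewrite <- Rmult_plus_distr_r.
    apply Rmult_le_compat_r; [left; apply Rinv_0_lt_compat; lra|lra].
  - apply (Rmult_le_reg_r (INR N)); auto.
    replace ((layer_sum T m hf N * / INR N + layer_sum T m hg N * / INR N + 1 * / INR N) * INR N)
      with (layer_sum T m hf N + layer_sum T m hg N + 1) by (field; lra).
    replace (layer_sum T m hs N * / INR N * INR N) with (layer_sum T m hs N) by (field; lra).
    lra.
Qed.

Lemma lower_sum_comp (a : T -> T) (Ha : forall P, m (fun x => P (a x)) = m P) n f :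
  lower_sum n (fun x => f (a x)) = lower_sum n f.
Proof.
  unfold lower_sum. rewrite (layer_sum_comp T m a Ha (fun x => scaled_floor (S n) (f x))).
  reflexivity.
Qed.

Lemma lower_sum_indicator n B : lower_sum n (indicator B) = m B.
Proof.
  unfold lower_sum.
  rewrite (layer_sum_ext T m (fun x => scaled_floor (S n) (indicator B x))
             (fun x => (S n * indicator_nat B x)%nat)).
  2:{ intros x; unfold indicator, indicator_nat; destruct excluded_middle_informative.
      - rewrite scaled_floor_1; lia.
      - rewrite scaled_floor_0; lia. }
  rewrite layer_sum_scaled_indicator by exact Hm.
  pose proof (INR_succ_pos n). field. lra.
Qed.

Lemma lower_sum_scaled_indicator_le n t B :
  0 <= t <= 1 -> lower_sum n (fun x => t * indicator B x) <= t * m B.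
Proof.
  intros Ht. unfold lower_sum. set (N := S n). set (k := scaled_floor N t).
  rewrite (layer_sum_ext T m (fun x => scaled_floor N (t * indicator B x))
             (fun x => (k * indicator_nat B x)%nat)).
  2:{ intros x; unfold indicator, indicator_nat, k; destruct excluded_middle_informative.
      - rewrite Rmult_1_r; lia.
      - rewrite Rmult_0_r, scaled_floor_0; lia. }
  assert (Hk : (k <= N)%nat) by (apply scaled_floor_le; auto).
  assert (E : layer_sum T m (fun x => (k * indicator_nat B x)%nat) N
              = layer_sum T m (fun x => (k * indicator_nat B x)%nat) k).
  { replace N with (k + (N - k))%nat by lia.
    apply layer_sum_beyond; [exact Hm|].
    intros x; unfold indicator_nat; destruct excluded_middle_informative; nia. }
  rewrite E, layer_sum_scaled_indicator by exact Hm.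
  destruct (scaled_floor_spec N t) as [H1 _]; [lra|]. fold k in H1.
  assert (HN : 0 < INR N) by apply INR_succ_pos.
  pose proof (mean_bounds T m Hm B).
  unfold Rdiv. apply (Rmult_le_reg_r (INR N)); auto.
  replace (INR k * m B * / INR N * INR N) with (INR k * m B) by (field; lra).
  assert (INR k * m B <= INR N * t * m B) by (apply Rmult_le_compat_r; lra).
  lra.
Qed.

Lemma lower_sum_mono n f g :
  unit_valued f -> (forall x, f x <= g x) -> lower_sum n f <= lower_sum n g.
Proof.
  intros Hf H. unfold lower_sum, Rdiv. apply Rmult_le_compat_r.
  - left; apply Rinv_0_lt_compat, INR_succ_pos.
  - apply (layer_sum_mono T m Hm). intros x. apply scaled_floor_mono; [apply Hf|apply H].
Qed.

Definition integral (f : T -> R) : R.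
Proof.
  refine (proj1_sig (completeness (fun r => exists n, r = lower_sum n f) _ _)).
  - exists 1. intros r [n ->]; apply lower_sum_bounds.
  - exists (lower_sum 0 f), 0%nat. reflexivity.
Defined.

Lemma integral_lub f : is_lub (fun r => exists n, r = lower_sum n f) (integral f).
Proof. unfold integral. apply proj2_sig. Qed.

Lemma lower_sum_le_integral n f : lower_sum n f <= integral f.
Proof. apply (integral_lub f). exists n; reflexivity. Qed.

Lemma integral_le_lower_sum n f :
  unit_valued f -> integral f <= lower_sum n f + 1 / INR (S n).
Proof.
  intros Hf. apply (integral_lub f). intros r [k ->]. apply lower_sum_le; auto.
Qed.

Lemma integral_bounds f : 0 <= integral f <= 1.
Proof.
  split.
  - pose proof (lower_sum_le_integral 0 f); pose proof (lower_sum_bounds 0 f); lra.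
  - apply (integral_lub f). intros r [k ->]; apply lower_sum_bounds.
Qed.

Lemma integral_add f g :
  unit_valued f -> unit_valued g -> unit_valued (fun x => f x + g x) ->
  integral (fun x => f x + g x) = integral f + integral g.
Proof.
  intros Hf Hg Hfg.
  assert (H3 : forall n, 3 / INR (S n) = 1 / INR (S n) + 1 / INR (S n) + 1 / INR (S n))
    by (intros n; pose proof (INR_succ_pos n); field; lra).
  apply Rle_antisym; apply (Rle_of_le_plus_div_succ _ _ 3); try lra; intros n;
    pose proof (lower_sum_add n f g Hf Hg Hfg); specialize (H3 n).
  - pose proof (integral_le_lower_sum n _ Hfg).
    pose proof (lower_sum_le_integral n f). pose proof (lower_sum_le_integral n g).
    lra.
  - pose proof (integral_le_lower_sum n _ Hf). pose proof (integral_le_lower_sum n _ Hg).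
    pose proof (lower_sum_le_integral n (fun x => f x + g x)).
    lra.
Qed.

Lemma integral_indicator B : integral (indicator B) = m B.
Proof.
  apply Rle_antisym.
  - apply (Rle_of_le_plus_div_succ _ _ 1); [lra|]. intros n.
    rewrite <- (lower_sum_indicator n B). apply integral_le_lower_sum, unit_valued_indicator.
  - rewrite <- (lower_sum_indicator 0 B). apply lower_sum_le_integral.
Qed.

Lemma integral_one : integral (fun _ => 1) = 1.
Proof.
  rewrite (functional_extensionality (fun _ : T => 1) (indicator (fun _ => True))).
  - rewrite integral_indicator. apply (mean_full T m Hm).
  - intros x; unfold indicator; destruct excluded_middle_informative; tauto.
Qed.

Lemma integral_comp (a : T -> T) (Ha : forall P, m (fun x => P (a x)) = m P) f :
  unit_valued f -> integral (fun x => f (a x)) = integral f.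
Proof.
  intros Hf. assert (Hfa : unit_valued (fun x => f (a x))) by (intros x; apply Hf).
  apply Rle_antisym; apply (Rle_of_le_plus_div_succ _ _ 1); try lra; intros n.
  - pose proof (integral_le_lower_sum n _ Hfa) as H1. pose proof (lower_sum_le_integral n f).
    rewrite (lower_sum_comp a Ha n f) in H1. lra.
  - pose proof (integral_le_lower_sum n f Hf).
    pose proof (lower_sum_le_integral n (fun x => f (a x))) as H1.
    rewrite (lower_sum_comp a Ha n f) in H1. lra.
Qed.

Lemma integral_mono f g :
  unit_valued f -> (forall x, f x <= g x) -> integral f <= integral g.
Proof.
  intros Hf H. apply (Rle_of_le_plus_div_succ _ _ 1); [lra|]. intros n.
  pose proof (integral_le_lower_sum n f Hf). pose proof (lower_sum_mono n f g Hf H).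
  pose proof (lower_sum_le_integral n g).
  lra.
Qed.

Lemma integral_scaled_indicator_le t B :
  0 <= t <= 1 -> integral (fun x => t * indicator B x) <= t * m B.
Proof.
  intros Ht. apply (Rle_of_le_plus_div_succ _ _ 1); [lra|]. intros n.
  pose proof (integral_le_lower_sum n _ (unit_valued_scaled_indicator t B Ht)).
  pose proof (lower_sum_scaled_indicator_le n t B Ht).
  lra.
Qed.

End Integral.

Section ProductMean.

Variable X : Type.
Variable mu : (X -> Prop) -> R.
Hypothesis Hmu : is_mean X mu.

(* [mu^n], seen as a mean on all lists and concentrated on those of length [n]. *)
Fixpoint prod_mean (n : nat) (A : list X -> Prop) : R :=
  match n with
  | O => indicator A nil
  | S n => integral X mu Hmu (fun x => prod_mean n (fun l => A (x :: l)))
  end.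

Lemma prod_mean_bounds n : forall A, 0 <= prod_mean n A <= 1.
Proof.
  induction n as [|n IH]; intros A; simpl.
  - apply unit_valued_indicator.
  - apply integral_bounds.
Qed.

Lemma prod_mean_ext n A B : (forall l, A l <-> B l) -> prod_mean n A = prod_mean n B.
Proof. intros H; rewrite (pred_ext A B H); reflexivity. Qed.

Lemma prod_mean_full n : prod_mean n (fun _ => True) = 1.
Proof.
  induction n as [|n IH]; simpl.
  - unfold indicator; destruct excluded_middle_informative; tauto.
  - rewrite IH. apply integral_one.
Qed.

Lemma prod_mean_union n : forall A B, (forall l, ~ (A l /\ B l)) ->
  prod_mean n (fun l => A l \/ B l) = prod_mean n A + prod_mean n B.
Proof.
  induction n as [|n IH]; intros A B H; simpl.
  - unfold indicator.
    destruct (excluded_middle_informative (A nil)), (excluded_middle_informative (B nil)),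
      (excluded_middle_informative (A nil \/ B nil)); try tauto; try lra.
    exfalso; apply (H nil); auto.
  - assert (E : forall x, prod_mean n (fun l => A (x :: l) \/ B (x :: l))
                          = prod_mean n (fun l => A (x :: l)) + prod_mean n (fun l => B (x :: l)))
      by (intros x; apply IH; intros l; apply H).
    rewrite (functional_extensionality _ _ E).
    apply integral_add; intros x; try apply prod_mean_bounds.
    rewrite <- E. apply prod_mean_bounds.
Qed.

Lemma prod_mean_is_mean n : is_mean (list X) (prod_mean n).
Proof.
  split; [|split].
  - apply prod_mean_bounds.
  - apply prod_mean_full.
  - apply prod_mean_union.
Qed.

Lemma prod_mean_Forall_le n B : prod_mean n (Forall B) <= mu B ^ n.
Proof.
  set (c := mu B). pose proof (mean_bounds X mu Hmu B) as Hc. fold c in Hc.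
  induction n as [|n IH]; simpl.
  - unfold indicator; destruct excluded_middle_informative; lra.
  - assert (Hcn : 0 <= c ^ n <= 1) by (apply pow_unit_interval; lra).
    apply Rle_trans with (integral X mu Hmu (fun x => c ^ n * indicator B x)).
    + apply integral_mono; [intros x; apply prod_mean_bounds|].
      intros x. unfold indicator. destruct excluded_middle_informative as [Bx|Bx].
      * rewrite Rmult_1_r, <- IH. apply Req_le, prod_mean_ext.
        intros l; rewrite Forall_cons_iff; tauto.
      * rewrite Rmult_0_r, (prod_mean_ext n _ (fun _ => False)).
        -- rewrite (mean_empty _ _ (prod_mean_is_mean n)). lra.
        -- intros l; rewrite Forall_cons_iff; tauto.
    + pose proof (integral_scaled_indicator_le X mu Hmu (c ^ n) B Hcn) as Hint.
      fold c in Hint. nra.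
Qed.

Section Invariance.

Variables f finv : X -> X.
Hypothesis finvK : forall x, finv (f x) = x.
Hypothesis fK : forall x, f (finv x) = x.
Hypothesis mu_finv : forall Q, mu (fun x => Q (finv x)) = mu Q.

Lemma prod_mean_map_image n : forall A,
  prod_mean n (fun l => exists a, A a /\ l = map f a) = prod_mean n A.
Proof.
  induction n as [|n IH]; intros A; simpl.
  - unfold indicator.
    destruct (excluded_middle_informative (exists a, A a /\ nil = map f a)) as [[a [Ha Ea]]|N1];
      destruct (excluded_middle_informative (A nil)); auto.
    + destruct a; [tauto|discriminate].
    + exfalso; apply N1; exists nil; auto.
  - set (F := fun y => prod_mean n (fun l => A (y :: l))).
    assert (E : forall x, prod_mean n (fun l => exists a, A a /\ x :: l = map f a) = F (finv x)).
    { intros x. unfold F. rewrite <- (IH (fun l => A (finv x :: l))).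
      apply prod_mean_ext. intros l; split.
      - intros [[|y a] [Ha Ea]]; [discriminate|]. injection Ea as -> ->.
        exists a; rewrite finvK; auto.
      - intros [a [Ha ->]]. exists (finv x :: a); simpl; rewrite fK; auto. }
    rewrite (functional_extensionality _ _ E).
    apply integral_comp; [exact mu_finv|]. intros y; apply prod_mean_bounds.
Qed.

End Invariance.

End ProductMean.

Section Mixture.

Variables (T K : Type) (m : (T -> Prop) -> R).
Hypothesis Hm : is_mean T m.
Variable nu : T -> (K -> Prop) -> R.
Hypothesis Hnu : forall i, is_mean K (nu i).

Lemma integral_is_mean : is_mean K (fun A => integral T m Hm (fun i => nu i A)).
Proof.
  split; [|split].
  - intros A. apply integral_bounds.
  - rewrite (functional_extensionality (fun i => nu i (full_set K)) (fun _ => 1))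
      by (intros i; apply mean_full, Hnu).
    apply integral_one.
  - intros A B HAB.
    assert (E : forall i, nu i (set_union A B) = nu i A + nu i B)
      by (intros i; apply mean_union; [apply Hnu|exact HAB]).
    rewrite (functional_extensionality _ _ E).
    apply integral_add; intros i; try apply mean_bounds, Hnu.
    rewrite <- E. apply mean_bounds, Hnu.
Qed.

End Mixture.

Lemma integral_vanishing (m : (nat -> Prop) -> R) (Hm : is_mean nat m)
  (Hfinite : forall N, m (fun n => (n < N)%nat) = 0) (a : nat -> R) :
  unit_valued a ->
  (forall eps, 0 < eps -> exists N, forall n, (N <= n)%nat -> a n <= eps) ->
  integral nat m Hm a = 0.
Proof.
  intros Ha Hlim. apply Rle_antisym; [|apply integral_bounds].
  apply Rle_plus_epsilon. intros eps Heps.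
  set (e := Rmin eps 1).
  assert (He : 0 <= e <= 1) by (unfold e, Rmin; destruct Rle_dec; lra).
  destruct (Hlim e ltac:(unfold e, Rmin; destruct Rle_dec; lra)) as [N HN].
  set (head := indicator (fun n => (n < N)%nat)).
  set (tail := fun n => e * indicator (fun n => ~ (n < N)%nat) n).
  assert (Hsum : unit_valued (fun n => head n + tail n)).
  { intros n; unfold head, tail, indicator.
    do 2 destruct excluded_middle_informative; try tauto; lra. }
  apply Rle_trans with (integral nat m Hm (fun n => head n + tail n)).
  - apply integral_mono; [exact Ha|]. intros n. unfold head, tail, indicator.
    destruct excluded_middle_informative as [L|L]; destruct excluded_middle_informative;
      try tauto.
    + specialize (Ha n); lra.
    + rewrite Rmult_1_r, Rplus_0_l. apply HN. lia.
  - rewrite integral_add; [|apply unit_valued_indicator|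
                            apply unit_valued_scaled_indicator; exact He|exact Hsum].
    unfold head. rewrite integral_indicator, Hfinite.
    pose proof (integral_scaled_indicator_le nat m Hm e (fun n => ~ (n < N)%nat) He) as Htail.
    pose proof (mean_bounds nat m Hm (fun n => ~ (n < N)%nat)).
    assert (e <= eps) by (unfold e, Rmin; destruct Rle_dec; lra).
    fold tail in Htail. nra.
Qed.

Lemma exists_nonprincipal_ultrafilter_nat :
  exists U : (nat -> Prop) -> Prop,
    ~ U (fun _ => False) /\
    (forall A B, U A -> (forall n, A n -> B n) -> U B) /\
    (forall A B, U A -> U B -> U (fun n => A n /\ B n)) /\
    (forall A, U A \/ U (fun n => ~ A n)) /\
    (forall N, U (fun n => (N <= n)%nat)).
Proof.
  destruct (@filter.ultraFilterLemma nat filter.eventually filter.eventually_filter)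
    as [U [UU Hsub]].
  exists U. split; [|split; [|split; [|split]]].
  - apply filter.filter_not_empty, UU.
  - intros A B HA HAB. exact (filter.filterS HAB HA).
  - intros A B HA HB. exact (filter.filterI HA HB).
  - intros A. exact (filter.in_ultra_setVsetC A UU).
  - intros N. apply Hsub. exists N; [exact I|].
    intros n Hn; exact (ssrbool.elimT ssrnat.leP Hn).
Qed.

Lemma exists_diffuse_mean_nat : exists m : (nat -> Prop) -> R,
  is_mean nat m /\ forall N, m (fun n => (n < N)%nat) = 0.
Proof.
  destruct exists_nonprincipal_ultrafilter_nat
    as [U [Unonempty [Uupward [Umeet [Uultra Ucofinite]]]]].
  assert (Udisjoint : forall A B, U A -> U B -> ~ (forall n, ~ (A n /\ B n))).
  { intros A B HA HB H. apply Unonempty.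
    apply (Uupward _ _ (Umeet A B HA HB)). intros n Hn; apply (H n); auto. }
  exists (fun A => if excluded_middle_informative (U A) then 1 else 0).
  split; [split; [|split]|].
  - intros A; destruct excluded_middle_informative; lra.
  - destruct excluded_middle_informative as [|N]; [lra|].
    destruct (Uultra (fun _ => False)) as [|H]; [tauto|].
    exfalso; apply N, (Uupward _ _ H); unfold full_set; auto.
  - intros A B HAB. unfold set_union, disjoint in *.
    destruct (excluded_middle_informative (U A)) as [UA|UA];
      destruct (excluded_middle_informative (U B)) as [UB|UB].
    + exfalso; apply (Udisjoint A B); auto.
    + destruct excluded_middle_informative as [|N]; [lra|].
      exfalso; apply N, (Uupward A); auto.
    + destruct excluded_middle_informative as [|N]; [lra|].
      exfalso; apply N, (Uupward B); auto.
    + destruct excluded_middle_informative as [UAB|]; [|lra]. exfalso.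
      destruct (Uultra A) as [|NA]; [tauto|]. destruct (Uultra B) as [|NB]; [tauto|].
      apply (Udisjoint _ _ UAB (Umeet _ _ NA NB)). intros n [[Ha|Hb] [Hna Hnb]]; auto.
  - intros N. destruct excluded_middle_informative as [UN|]; [|reflexivity]. exfalso.
    apply (Udisjoint _ (fun n => (N <= n)%nat) UN (Ucofinite N)). intros n; lia.
Qed.

Lemma countably_infinite_of_bijection (T : Type) (g : T -> nat) :
  (forall x y, g x = g y -> x = y) -> (forall n, exists x, g x = n) -> countably_infinite T.
Proof.
  intros Hi Hs.
  exists (fun n => proj1_sig (constructive_indefinite_description _ (Hs n))). split.
  - intros a b E.
    destruct (constructive_indefinite_description _ (Hs a)) as [x Hx].
    destruct (constructive_indefinite_description _ (Hs b)) as [y Hy].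
    simpl in E. subst; reflexivity.
  - intros x. exists (g x).
    destruct (constructive_indefinite_description _ (Hs (g x))) as [y Hy].
    simpl. apply Hi; auto.
Qed.

Fixpoint encode_list (l : list nat) : nat :=
  match l with
  | nil => 0%nat
  | x :: l => S (Cantor.to_nat (x, encode_list l))
  end.

Lemma encode_list_inj l1 : forall l2, encode_list l1 = encode_list l2 -> l1 = l2.
Proof.
  induction l1 as [|a l1 IH]; intros [|b l2]; cbn [encode_list]; intros E;
    try discriminate; auto.
  apply eq_add_S, (f_equal Cantor.of_nat) in E. rewrite !Cantor.cancel_of_to in E.
  injection E as -> E. f_equal; auto.
Qed.

Lemma encode_list_surj n : exists l, encode_list l = n.
Proof.
  induction n as [n IH] using (well_founded_induction Wf_nat.lt_wf).
  destruct n as [|k]; [exists nil; reflexivity|].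
  destruct (Cantor.of_nat k) as [x y] eqn:E.
  assert (Ek : Cantor.to_nat (x, y) = k) by (rewrite <- E; apply Cantor.cancel_to_of).
  pose proof (Cantor.to_nat_non_decreasing x y).
  destruct (IH y) as [l Hl]; [lia|]. exists (x :: l). cbn [encode_list]. rewrite Hl, Ek; auto.
Qed.

Lemma countably_infinite_list (X : Type) : countably_infinite X -> countably_infinite (list X).
Proof.
  intros [f [Hi Hs]].
  set (h := fun x => proj1_sig (constructive_indefinite_description _ (Hs x))).
  assert (Hh : forall x, f (h x) = x)
    by (intros x; unfold h; destruct constructive_indefinite_description; auto).
  apply (countably_infinite_of_bijection _ (fun l => encode_list (map h l))).
  - intros a b E. apply encode_list_inj, (f_equal (map f)) in E.
    rewrite !map_map, !(map_ext _ (fun x => x) Hh), !map_id in E. exact E.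
  - intros n. destruct (encode_list_surj n) as [l Hl]. exists (map f l).
    rewrite map_map, (map_ext _ (fun x => x)), map_id; [exact Hl|].
    intros a. apply Hi. rewrite Hh. reflexivity.
Qed.

Section Action.

Variables (G X : Type) (mul : G -> G -> G) (one : G) (inv : G -> G).
Hypothesis HG : is_group G mul one inv.
Variable act : G -> X -> X.
Hypothesis Hact : is_action G X mul one act.

Lemma act_cancel g h : mul h g = one -> forall x, act h (act g x) = x.
Proof.
  intros Hhg x. destruct Hact as [Hone Hmul]. rewrite <- Hmul, Hhg. apply Hone.
Qed.

Lemma act_invK g x : act (inv g) (act g x) = x.
Proof. apply act_cancel. apply HG. Qed.

Lemma act_Kinv g x : act g (act (inv g) x) = x.
Proof. apply act_cancel. apply HG. Qed.

Lemma mean_preimage_act_inv (mu : (X -> Prop) -> R) :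
  preserves_mean act mu -> forall g Q, mu (fun x => Q (act (inv g) x)) = mu Q.
Proof.
  intros Hpres g Q. rewrite <- (Hpres g Q). f_equal. apply pred_ext. intros x; split.
  - intros Hq. exists (act (inv g) x). rewrite act_Kinv; auto.
  - intros [a [Ha ->]]. rewrite act_invK; auto.
Qed.

Definition list_action (g : G) (l : list X) : list X := map (act g) l.

Lemma list_action_is_action : is_action G (list X) mul one list_action.
Proof.
  destruct Hact as [Hone Hmul]. unfold list_action. split.
  - intros l. rewrite (map_ext _ (fun x => x) Hone). apply map_id.
  - intros g h l. rewrite map_map. apply map_ext. apply Hmul.
Qed.

Lemma fix_set_list_action g l : fix_set list_action g l <-> Forall (fix_set act g) l.
Proof.
  unfold fix_set, list_action. rewrite Forall_forall.
  rewrite <- (map_id l) at 2. apply map_ext_in_iff.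
Qed.

End Action.

Theorem lemma5p2 (G : Type) (mul : G -> G -> G) (one : G) (inv : G -> G)
  (HG : is_group G mul one inv) (HGc : countable G)
  (X : Type) (act : G -> X -> X) (mu : (X -> Prop) -> R)
  (HX : countably_infinite X) (Hact : is_action G X mul one act)
  (Hmu : is_mean X mu) (Hpres : preserves_mean act mu)
  (Hfix : forall g, g <> one -> mu (fix_set act g) < 1) :
  exists (K : Type) (actK : G -> K -> K) (nu : (K -> Prop) -> R),
    countably_infinite K /\ is_action G K mul one actK /\ is_mean K nu /\
    preserves_mean actK nu /\
    (forall g, g <> one -> nu (fix_set actK g) = 0).
Proof.
  destruct exists_diffuse_mean_nat as [m [Hm Hm_finite]].
  set (mu_n := prod_mean X mu Hmu).
  exists (list X), (list_action G X act), (fun A => integral nat m Hm (fun n => mu_n n A)).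
  split; [|split; [|split; [|split]]].
  - apply countably_infinite_list, HX.
  - apply list_action_is_action, Hact.
  - apply integral_is_mean, prod_mean_is_mean.
  - intros g A. f_equal. apply functional_extensionality. intros n.
    apply (prod_mean_map_image X mu Hmu (act g) (act (inv g))).
    + exact (act_invK G X mul one inv HG act Hact g).
    + exact (act_Kinv G X mul one inv HG act Hact g).
    + exact (mean_preimage_act_inv G X mul one inv HG act Hact mu Hpres g).
  - intros g Hg. set (c := mu (fix_set act g)).
    assert (Hc : 0 <= c < 1) by (split; [apply mean_bounds, Hmu|apply Hfix, Hg]).
    apply integral_vanishing; [exact Hm_finite|intros n; apply prod_mean_bounds|].
    intros eps Heps.
    destruct (pow_lt_1_zero c ltac:(rewrite Rabs_pos_eq; lra) eps Heps) as [N HN].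
    exists N. intros n Hn. specialize (HN n Hn).
    rewrite Rabs_pos_eq in HN by (apply pow_le; lra).
    unfold mu_n. rewrite (prod_mean_ext X mu Hmu n _ (Forall (fix_set act g)))
      by (intros l; apply fix_set_list_action).
    pose proof (prod_mean_Forall_le X mu Hmu n (fix_set act g)) as Hpow.
    fold c in Hpow. lra.
Qed.
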